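(* Let $w\in\mathcal{W}^o_n$ and let $(O,E)\to(O',E')$ be one application of the step $(\psi)$ during the computation of $\Psi(w)$. Then $(O,E)$ is obtained from $(O',E')$ by applying one step $(\omega)$.
   Context: Fix a finite totally ordered alphabet $A$. Words are finite sequences over $A$; $-$ is the empty word. $<$ is lexicographic order (a proper prefix is smaller than the word); $\infty$ is a formal symbol with $w<\infty$ for all words $w$. A Lyndon word is a nonempty word strictly smaller than each of its proper nonempty suffixes. Every word has a unique Lyndon factorization $w=\ell_1\cdots\ell_m$ into Lyndon words with $\ell_1\ge\dots\ge\ell_m$, written $\ell_1|\cdots|\ell_m$. Odd/even refer to lengths. For a Lyndon word $\ell$ with $|\ell|\ge2$, its standard factorization is $\ell=rs$ with $s$ the longest proper suffix of $\ell$ that is Lyndon (equivalently the smallest proper nonempty suffix). $\mathcal{W}^o_n$: words of length $n$ whose Lyndon factors are all odd and pairwise distinct. Step $(\psi)$ on a pair of words $(O,E)$ with $|O|\ge2$ (as used in computing $\Psi(w)$, which starts from $(w,-)$ and iterates $(\psi)$ while $|O|\ge2$): let $O=o_1|\cdots|o_m$ (with $o_{m-1}=\infty$ if $m=1$); $o_m$ is splittable if $|o_m|\ge2$ and its standard factorization $o_m=rs$ satisfies $s<o_{m-1}$. Update to: (S) $(o_1\cdots o_{m-1}r,\ sE)$ if splittable and $r$ odd; (P) $(o_1\cdots o_{m-1}s,\ rE)$ if splittable and $r$ even; (F) $(o_1\cdots o_{m-2},\ o_mo_{m-1}E)$ if not splittable. Iterated standard factorization (ISF) of a Lyndon word $\ell$,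 $|\ell|\ge2$, with respect to $u$ (a word or $\infty$): the unique factorization $\ell=r_js_js_{j-1}\cdots s_1$, $j\ge1$, such that (a) for every $i\in[j]$, $s_i$ is the smallest proper nonempty suffix of $r_js_j\cdots s_i$; (b) for $i\in[j-1]$, $s_i$ is even and $s_i<u$; (c) $s_j$ is odd or $u\le s_j$. Step $(\omega)$ on a pair $(O',E')$ with $E'$ nonempty: let $O'=o'_1|\cdots|o'_h$ and $E'=e'_1|\cdots|e'_k$ be Lyndon factorizations (with $o'_h=\infty$ if $O'$ is empty). If $o'_h<e'_1$, update to (S') $(O'e'_1,\ e'_2\cdots e'_k)$. Otherwise let $e'_1=r_js_js_{j-1}\cdots s_1$ be the ISF of $e'_1$ with respect to $o'_h$ and update to (P') $(o'_1\cdots o'_{h-1}r_js_jo'_h,\ s_{j-1}\cdots s_1e'_2\cdots e'_k)$ if $o'_h\le s_j$, or to (F') $(O's_jr_j,\ s_{j-1}\cdots s_1e'_2\cdots e'_k)$ if $s_j<o'_h$. *)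

From HB Require Import structures.
From mathcomp Require Import all_boot all_order.
Set Implicit Arguments. Unset Strict Implicit. Unset Printing Implicit Defensive.
Import Order.TTheory.

Section Words.
Variables (d : Order.disp_t) (T : finOrderType d).
Notation word := (seq T).

Fixpoint lexlt (u v : word) : bool :=
  match u, v with
  | [::], [::] => false
  | [::], _ :: _ => true
  | _ :: _, [::] => false
  | a :: u', b :: v' => (a < b)%O || ((a == b) && lexlt u' v')
  end.
Definition lexle (u v : word) : bool := (u == v) || lexlt u v.

(* words extended by infinity: None = oo, with w < oo for all words w *)
Definition ltinf (u v : option word) : bool :=
  match u, v with
  | Some a, Some b => lexlt a b
  | Some _, None => true
  | None, _ => false
  end.
Definition leinf (u v : option word) : bool := (u == v) || ltinf u v.

Definition psuffixes (w : word) : seq word :=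
  [seq drop i w | i <- iota 1 (size w).-1].

Definition lyndon (w : word) : bool :=
  (w != [::]) && all (fun s => lexlt w s) (psuffixes w).

(* all factorizations of w into nonempty pieces *)
Fixpoint splits (w : word) : seq (seq word) :=
  match w with
  | [::] => [:: [::]]
  | a :: w' =>
      flatten [seq (if fs is f :: fs' then [:: [:: a] :: fs; (a :: f) :: fs']
                    else [:: [:: [:: a]]]) | fs <- splits w']
  end.

Definition is_lfact (w : word) (fs : seq word) : bool :=
  [&& flatten fs == w, all lyndon fs & sorted (fun x y => lexle y x) fs].

(* THE Lyndon factorization (the first factorization of w satisfying
   is_lfact; it exists and is unique) *)
Definition lfact (w : word) : seq word :=
  nth [::] [seq fs <- splits w | is_lfact w fs] 0.

Definition std_idx (l : word) : nat :=
  (find (fun i => lyndon (drop i l)) (iota 1 (size l).-1)).+1.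
Definition std_r (l : word) : word := take (std_idx l) l.
Definition std_s (l : word) : word := drop (std_idx l) l.

(* step (psi), applied when size O >= 2 *)
Definition psi_step (p : word * word) : word * word :=
  let (O, E) := p in
  let fs := lfact O in
  let m := size fs in
  let om := last [::] fs in
  let om1 : option word := if 2 <= m then Some (nth [::] fs (m - 2)) else None in
  let r := std_r om in
  let s := std_s om in
  let pre := flatten (take m.-1 fs) in
  if (2 <= size om) && ltinf (Some s) om1 then
    (if odd (size r) then (pre ++ r, s ++ E) else (pre ++ s, r ++ E))
  else (flatten (take (m - 2) fs), om ++ nth [::] fs (m - 2) ++ E).

Inductive psi_reach (w : word) : word * word -> Prop :=
  | psi_reach0 : psi_reach w (w, [::])
  | psi_reachS p : psi_reach w p -> 1 < size p.1 -> psi_reach w (psi_step p).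

Definition smallest_psuffix (s x : word) : bool :=
  (s \in psuffixes x) && all (lexle s) (psuffixes x).

(* pcs = r_j :: [:: s_j; ...; s_1] is the ISF of l w.r.t. u *)
Definition is_isf (l : word) (u : option word) (pcs : seq word) : bool :=
  match pcs with
  | r :: ((sj :: _) as ss) =>
      [&& flatten pcs == l,
          all (fun k => smallest_psuffix (nth [::] ss k)
                          (flatten (r :: take k.+1 ss))) (iota 0 (size ss)),
          all (fun s => ~~ odd (size s) && ltinf (Some s) u) (behead ss)
        & odd (size sj) || leinf u (Some sj)]
  | _ => false
  end.

Definition isf (l : word) (u : option word) : seq word :=
  nth [::] [seq pcs <- splits l | is_isf l u pcs] 0.

(* step (omega), applied when E' is nonempty *)
Definition omega_step (p : word * word) : word * word :=
  let (O', E') := p in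
  let ofs := lfact O' in
  let efs := lfact E' in
  let oh : option word := if ofs is [::] then None else Some (last [::] ofs) in
  let e1 := head [::] efs in
  let erest := flatten (behead efs) in
  if ltinf oh (Some e1) then (O' ++ e1, erest)
  else
    let pcs := isf e1 oh in
    let rj := head [::] pcs in
    let ss := behead pcs in
    let sj := head [::] ss in
    let E'' := flatten (behead ss) ++ erest in
    if leinf oh (Some sj) then
      (flatten (belast [::] ofs) ++ rj ++ sj ++ last [::] ofs, E'')
    else (O' ++ sj ++ rj, E'').

Definition Wo (n : nat) (w : word) : bool :=
  [&& size w == n, all (fun l => odd (size l)) (lfact w) & uniq (lfact w)].

End Words.

(* Along the computation of Psi(w) for w in W^o_n, the pair (O, E) keeps an
   invariant ([psi_inv]): the Lyndon factors of O are odd and strictly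
   decreasing, those of E are even, and the first factor e of E is at most
   every proper suffix of the last factor o_m of O and smaller than o_{m-1}.
   Under it each case of (psi) is undone by the matching case of (omega).
   In (S), s becomes the first factor of E and exceeds o'_h = r, so (S')
   applies.  In (P) and (F) the word prepended to E (r, resp. o_m o_{m-1}) is
   Lyndon and absorbs the leading factors of E that exceed the word built so
   far; each absorbed factor is then the smallest proper suffix of that word,
   so the ISF of the new first factor of E is [std_r r; std_s r; absorbed],
   resp. [o_m; o_{m-1}; absorbed], and the comparison of s_j with o'_h selects
   (P') since s <= std_s r, resp. (F') since o_{m-1} < o_{m-2}. *)

From mathcomp Require Import all_boot all_order zify.
Set Implicit Arguments. Unset Strict Implicit. Unset Printing Implicit Defensive.
Import Order.TTheory.

Lemma all_take (A : Type) (P : pred A) t (s : seq A) : all P s -> all P (take t s).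
Proof. by rewrite -{1}(cat_take_drop t s) all_cat => /andP[]. Qed.

Lemma all_drop (A : Type) (P : pred A) t (s : seq A) : all P s -> all P (drop t s).
Proof. by rewrite -{1}(cat_take_drop t s) all_cat => /andP[]. Qed.

Lemma nth0_eq_all (A : eqType) (s : seq A) (a b : A) :
  a \in s -> {in s, forall c, c = a} -> nth b s 0 = a.
Proof. by case: s => //= c s _; apply; rewrite mem_head. Qed.

Lemma cat_injl (A : eqType) (s : seq A) : injective (cat^~ s).
Proof.
move=> u v uv; have /eqP := uv; rewrite eqseq_cat => [/andP[/eqP]//|].
by move/(congr1 size): uv; rewrite !size_cat => /addIn.
Qed.

Lemma cat_neq0l (A : eqType) (u v : seq A) : u != [::] -> u ++ v != [::].
Proof. by rewrite -!nilpE cat_nilp => /negPf->. Qed.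

Section Lexicographic.
Variables (d : Order.disp_t) (T : finOrderType d).
Notation word := (seq T).
Implicit Types u v w x y z p : word.

Lemma lexltE u v : lexlt u v = (u < v :> seqlexi T)%O.
Proof.
elim: u v => [|a u IH] [|b v] //=; rewrite ltxi_cons IH.
by case: (ltgtP a b) => //= ->.
Qed.

Lemma lexleE u v : lexle u v = (u <= v :> seqlexi T)%O.
Proof. by rewrite /lexle lexltE le_eqVlt. Qed.

Lemma lexltxx u : lexlt u u = false.
Proof. by rewrite lexltE ltxx. Qed.

Lemma lexle_refl u : lexle u u.
Proof. by rewrite lexleE lexx. Qed.

Lemma lexltNge u v : lexlt u v = ~~ lexle v u.
Proof. by rewrite lexltE lexleE ltNge. Qed.

Lemma lexleNgt u v : lexle u v = ~~ lexlt v u.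
Proof. by rewrite lexltNge negbK. Qed.

Lemma lexltW u v : lexlt u v -> lexle u v.
Proof. by rewrite lexltE lexleE => /ltW. Qed.

Lemma lexle_total : total (@lexle _ T).
Proof. by move=> u v; rewrite !lexleE le_total. Qed.

Lemma lexle_anti u v : lexle u v -> lexle v u -> u = v.
Proof. by rewrite !lexleE => uv vu; apply: (@le_anti _ (seqlexi T)); rewrite uv. Qed.

Lemma lexlt_trans v u w : lexlt u v -> lexlt v w -> lexlt u w.
Proof. by rewrite !lexltE; apply: lt_trans. Qed.

Lemma lexle_trans v u w : lexle u v -> lexle v w -> lexle u w.
Proof. by rewrite !lexleE; apply: le_trans. Qed.

Lemma lexle_lt_trans v u w : lexle u v -> lexlt v w -> lexlt u w.
Proof. by rewrite lexleE !lexltE; apply: le_lt_trans. Qed.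

Lemma lexlt_asym u v : lexlt u v -> lexlt v u -> False.
Proof. by move=> uv /(lexlt_trans uv); rewrite lexltxx. Qed.

Lemma lexlt0s v : lexlt [::] v = (v != [::]).
Proof. by case: v. Qed.

Lemma lexle0s v : lexle [::] v.
Proof. by rewrite /lexle lexlt0s; case: v. Qed.

Lemma lexlt_cat2l p u v : lexlt (p ++ u) (p ++ v) = lexlt u v.
Proof. by elim: p => //= a p ->; rewrite ltxx eqxx. Qed.

Lemma lexlt_prefix u w : w != [::] -> lexlt u (u ++ w).
Proof. by move=> w0; rewrite -{1}(cats0 u) lexlt_cat2l lexlt0s. Qed.

Lemma lexle_prefix u w : lexle u (u ++ w).
Proof. by case: w => [|a w]; [rewrite cats0 lexle_refl|apply/lexltW/lexlt_prefix]. Qed.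

Lemma lexlt_prefix_or_mismatch u v : lexlt u v ->
  (exists2 w, w != [::] & v = u ++ w) \/ (forall x y, lexlt (u ++ x) (v ++ y)).
Proof.
elim: u v => [|a u IH] [|b v] //=; first by left; exists (b :: v).
case/orP=> [ab|/andP[/eqP<- /IH[[w w0 ->]|uv]]].
- by right=> x y; rewrite /= ab.
- by left; exists w.
- by right=> x y; rewrite /= eqxx ltxx uv.
Qed.

Lemma lexlt_cat_mismatch u v x y : lexlt u v -> size v <= size u ->
  lexlt (u ++ x) (v ++ y).
Proof.
case/lexlt_prefix_or_mismatch=> [[w w0 ->]|//].
by rewrite size_cat -{2}(addn0 (size u)) leq_add2l leqn0 size_eq0 (negbTE w0).
Qed.

Lemma lexle_catr u v z : lexle u v -> lexle u (v ++ z).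
Proof.
case/orP=> [/eqP->|/lexlt_prefix_or_mismatch[[w w0 ->]|uv]]; first exact: lexle_prefix.
- by rewrite -catA; apply: lexle_prefix.
- by apply: lexltW; rewrite -(cats0 u) uv.
Qed.

End Lexicographic.

Section Suffixes.
Variables (d : Order.disp_t) (T : finOrderType d).
Notation word := (seq T).
Implicit Types u v w x y z p : word.

(* Stated for [word], not for any eqType: the generic version puts [size] at a
   different (convertible) element type, which [lia] treats as another atom. *)
Lemma size_gt0 x : (0 < size x) = (x != [::]).
Proof. by rewrite lt0n size_eq0. Qed.

Lemma psuffixes_dropP x y :
  reflect (exists2 i, 0 < i < size x & y = drop i x) (y \in psuffixes x).
Proof.
apply: (iffP mapP) => [[i]|[i ix ->]]; last by exists i; rewrite // mem_iota -subn1; lia.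
by rewrite mem_iota -subn1 => ix ->; exists i => //; lia.
Qed.

Lemma psuffixP x y :
  reflect (exists p, [/\ p != [::], y != [::] & x = p ++ y]) (y \in psuffixes x).
Proof.
apply: (iffP (psuffixes_dropP _ _)) => [[i ix ->]|[p [p0 y0 ->]]].
  exists (take i x); rewrite cat_take_drop -!size_gt0 size_drop size_takel;
  [split=> //; lia|lia].
exists (size p); last by rewrite drop_size_cat.
by move: p0 y0; rewrite size_cat -!size_gt0; lia.
Qed.

Lemma psuffix_cat p y : p != [::] -> y != [::] -> y \in psuffixes (p ++ y).
Proof. by move=> p0 y0; apply/psuffixP; exists p. Qed.

Lemma psuffix_neq0 x y : y \in psuffixes x -> y != [::].
Proof. by case/psuffixP=> p []. Qed.

Lemma size_psuffix x y : y \in psuffixes x -> size y < size x.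
Proof. by case/psuffixP=> p [p0 _ ->]; move: p0; rewrite size_cat -size_gt0; lia. Qed.

Lemma psuffixes_small x : size x <= 1 -> psuffixes x = [::].
Proof. by case: x => [|a [|b x]]. Qed.

Lemma psuffix_trans x y z : y \in psuffixes x -> z \in psuffixes y -> z \in psuffixes x.
Proof.
case/psuffixP=> p [p0 _ ->] /psuffixP[q [_ z0 ->]]; rewrite catA psuffix_cat //.
by move: p0; rewrite -!size_gt0 size_cat; lia.
Qed.

Lemma psuffix_catr u v y : y \in psuffixes u -> y ++ v \in psuffixes (u ++ v).
Proof.
case/psuffixP=> p [p0 y0 ->]; rewrite -catA psuffix_cat //.
by move: y0; rewrite -!size_gt0 size_cat; lia.
Qed.

Lemma psuffixes_catP u v y : u != [::] -> y \in psuffixes (u ++ v) ->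
  [\/ exists2 y', y' \in psuffixes u & y = y' ++ v, y = v | y \in psuffixes v].
Proof.
move=> u0 /psuffixP[p [p0 y0 uvE]].
have -> : y = drop (size p) (u ++ v) by rewrite uvE drop_size_cat.
move/(congr1 size): uvE y0 p0; rewrite !size_cat -!size_gt0 => uvE y0 p0.
rewrite drop_cat; case: ltngtP => [pu|up|<-]; last by rewrite subnn drop0; constructor 2.
- constructor 1; exists (drop (size p) u) => //.
  rewrite -{2}(cat_take_drop (size p) u); apply: psuffix_cat;
    by rewrite -size_gt0 ?size_drop ?size_takel; lia.
- constructor 3; rewrite -{2}(cat_take_drop (size p - size u) v); apply: psuffix_cat;
    by rewrite -size_gt0 ?size_drop ?size_takel; lia.
Qed.

End Suffixes.

Section Lyndon.
Variables (d : Order.disp_t) (T : finOrderType d).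
Notation word := (seq T).
Implicit Types u v w x y z p l : word.

Lemma lyndon_neq0 x : lyndon x -> x != [::].
Proof. by case/andP. Qed.

Lemma lyndon_lt_psuffix x y : lyndon x -> y \in psuffixes x -> lexlt x y.
Proof. by case/andP=> _ /allP; apply. Qed.

Lemma lyndon_intro x : x != [::] -> {in psuffixes x, forall y, lexlt x y} -> lyndon x.
Proof. by move=> x0 xlt; apply/andP; split=> //; apply/allP. Qed.

Lemma lexlt_cat_lyndon u v : u != [::] -> lexlt u v -> lyndon v -> lexlt (u ++ v) v.
Proof.
move=> u0 /lexlt_prefix_or_mismatch[[w w0 ->] vL|uv _].
- by rewrite lexlt_cat2l; apply: lyndon_lt_psuffix vL _; apply: psuffix_cat.
- by rewrite -{2}(cats0 v) uv.
Qed.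

Lemma lyndon_cat u v : lyndon u -> lyndon v -> lexlt u v -> lyndon (u ++ v).
Proof.
move=> uL vL uv; have u0 := lyndon_neq0 uL.
apply: lyndon_intro => [|y /(psuffixes_catP u0)[[y' y'u ->]|->|yv]].
- exact: cat_neq0l.
- exact: lexlt_cat_mismatch (lyndon_lt_psuffix uL y'u) (ltnW (size_psuffix y'u)).
- exact: lexlt_cat_lyndon.
- exact: lexlt_trans (lexlt_cat_lyndon u0 uv vL) (lyndon_lt_psuffix vL yv).
Qed.

Lemma smallest_psuffix_cat u v : u != [::] -> lyndon v ->
  all (lexle v) (psuffixes u) -> smallest_psuffix v (u ++ v).
Proof.
move=> u0 vL /allP vu; rewrite /smallest_psuffix psuffix_cat ?(lyndon_neq0 vL) //=.
apply/allP => y /(psuffixes_catP u0)[[y' /vu vy' ->]|->|yv].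
- exact: lexle_catr.
- exact: lexle_refl.
- exact/lexltW/(lyndon_lt_psuffix vL).
Qed.

Lemma smallest_psuffix_uniq a b x :
  smallest_psuffix a x -> smallest_psuffix b x -> a = b.
Proof.
by case/andP=> ax /allP aS /andP[bx /allP bS]; apply: lexle_anti; [apply: aS|apply: bS].
Qed.

Lemma smallest_psuffix_exists x : 1 < size x -> exists z, smallest_psuffix z x.
Proof.
move=> x1; have := mem_sort (@lexle _ T) (psuffixes x).
have := sort_sorted (@lexle_total _ T) (psuffixes x).
case: (sort _ _) => [|z s] zs memS.
  move/(_ (behead x)): memS; rewrite in_nil; case: x x1 => [|a [|b x]] //= _.
  by rewrite (@psuffix_cat _ _ [:: a]).
exists z; rewrite /smallest_psuffix -memS mem_head /=.
apply/allP => y; rewrite -memS inE => /predU1P[->|ys]; first exact: lexle_refl.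
by move: zs => /=; rewrite (path_sortedE (@lexle_trans _ T)) => /andP[/allP/(_ _ ys)].
Qed.

Lemma smallest_psuffix_lyndon z x : smallest_psuffix z x -> lyndon z.
Proof.
case/andP=> zx /allP zS; apply: lyndon_intro => [|y yz]; first exact: psuffix_neq0 zx.
have /orP[/eqP zy|//] := zS _ (psuffix_trans zx yz).
by move: (size_psuffix yz); rewrite zy ltnn.
Qed.

(* So the smallest proper suffix is the longest Lyndon proper suffix, [std_s]. *)
Lemma lyndon_psuffix_size_le z x y : smallest_psuffix z x ->
  y \in psuffixes x -> lyndon y -> size y <= size z.
Proof.
case/andP=> zx /allP zS yx yL; rewrite leqNgt; apply/negP => zy.
have zsy : z \in psuffixes y.
  move: zx yx zy => /psuffixes_dropP[i ix ->] /psuffixes_dropP[j jx ->].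
  rewrite !size_drop => ji; apply/psuffixes_dropP; exists (i - j).
    by rewrite size_drop; lia.
  by rewrite drop_drop subnK //; lia.
by move: (zS _ yx); rewrite lexleNgt (lyndon_lt_psuffix yL zsy).
Qed.

Lemma std_s_smallest l : 1 < size l -> smallest_psuffix (std_s l) l.
Proof.
move=> l1; have [z zl] := smallest_psuffix_exists l1.
have /psuffixes_dropP[k kl zE] := proj1 (andP zl).
set P := fun i => lyndon (drop i l); set s := iota 1 (size l).-1.
have size_s : size s = (size l).-1 by rewrite size_iota.
have nth_s i : i < size s -> nth 0 s i = i.+1 by rewrite size_s => ?; rewrite nth_iota.
have ks : k.-1 < size s by rewrite size_s; lia.
have Pk : P (nth 0 s k.-1).
  by rewrite nth_s // prednK; [rewrite /P -zE; apply: smallest_psuffix_lyndon zl|lia].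
have idx_le : find P s <= k.-1.
  by rewrite leqNgt; apply/negP => /(before_find 0); rewrite Pk.
have has_s : has P s by apply/(has_nthP 0); exists k.-1.
have idx_s : find P s < size s by rewrite -has_find.
have stdL : lyndon (std_s l) by rewrite /std_s /std_idx -nth_s //; apply: nth_find has_s.
have stdS : std_s l \in psuffixes l.
  apply/psuffixes_dropP; exists (std_idx l) => //.
  by rewrite /std_idx -/P -/s; move: idx_s; rewrite size_s; lia.
have := lyndon_psuffix_size_le zl stdS stdL.
rewrite /std_s zE !size_drop /std_idx -/P -/s => idx_ge.
have -> : (find P s).+1 = k by lia.
by rewrite -zE.
Qed.

Lemma std_rs l : std_r l ++ std_s l = l.
Proof. exact: cat_take_drop. Qed.

Lemma std_s_lyndon l : 1 < size l -> lyndon (std_s l).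
Proof. by move/std_s_smallest/smallest_psuffix_lyndon. Qed.

Lemma std_r_neq0 l : 1 < size l -> std_r l != [::].
Proof.
move/std_s_smallest/andP=> [/size_psuffix]; rewrite -{2}(std_rs l) size_cat -size_gt0.
by lia.
Qed.

Lemma std_s_le_psuffixes_r l : 1 < size l -> all (lexle (std_s l)) (psuffixes (std_r l)).
Proof.
move=> l1; have /andP[_ /allP sS] := std_s_smallest l1.
case: (ltnP 1 (size (std_r l))) => [r1|]; last by move/psuffixes_small->.
have [z /andP[zr /allP zS]] := smallest_psuffix_exists r1.
suff sz : lexle (std_s l) z by apply/allP => y /zS; apply: lexle_trans sz.
rewrite lexleNgt; apply/negP => zs.
have zsS : z ++ std_s l \in psuffixes l by rewrite -{2}(std_rs l) psuffix_catr.
move: (sS _ zsS); rewrite lexleNgt.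
by rewrite (lexlt_cat_lyndon (psuffix_neq0 zr) zs (std_s_lyndon l1)).
Qed.

Lemma std_r_lyndon l : lyndon l -> 1 < size l -> lyndon (std_r l).
Proof.
move=> lL l1; have /andP[_ /allP sS] := std_s_smallest l1.
have r0 := std_r_neq0 l1; have lE := esym (std_rs l).
set r := std_r l in r0 lE *; set s := std_s l in sS lE *.
apply: lyndon_intro => // y yr; have y0 := psuffix_neq0 yr.
have lys : lexlt l (y ++ s) by apply: lyndon_lt_psuffix lL _; rewrite lE psuffix_catr.
rewrite lexltNge; apply/negP => /orP[/eqP yE|/lexlt_prefix_or_mismatch[[w w0 rE]|yr']].
- by move: (size_psuffix yr); rewrite yE ltnn.
- move: lys; rewrite lE rE -catA lexlt_cat2l => wss.
  have wsS : w ++ s \in psuffixes l by rewrite lE rE -catA psuffix_cat ?cat_neq0l.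
  by move: (sS _ wsS); rewrite lexleNgt wss.
- by move: lys; rewrite lE => /lexlt_asym; apply; apply: yr'.
Qed.

End Lyndon.

Notation lexge := (fun x y => lexle y x).
Notation lexgt := (fun x y => lexlt y x).

Section LyndonFactorization.
Variables (d : Order.disp_t) (T : finOrderType d).
Notation word := (seq T).
Implicit Types u v w x y z p l : word.
Implicit Types fs gs es : seq word.

Lemma lexge_trans : transitive (fun x y : word => lexle y x).
Proof. by move=> y x z xy yz; apply: lexle_trans yz xy. Qed.

Lemma lexge_path_sortedE x fs : path lexge x fs = all (lexge x) fs && sorted lexge fs.
Proof. exact: (path_sortedE lexge_trans). Qed.

Lemma mem_splits w fs : flatten fs = w -> all (fun f => f != [::]) fs -> fs \in splits w.
Proof.
elim: w fs => [|a w IH] [|[|b f] fs] //= [<- fE] fs0; apply/flatten_mapP.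
case: f fE => [|c f] /= fE.
- by exists fs; [apply: IH|case: (fs) => [|g gs]; rewrite !inE eqxx].
- by exists ((c :: f) :: fs); [apply: IH => //=; rewrite fs0|rewrite !inE eqxx orbT].
Qed.

Lemma prefix_flatten_suffix_le f gs n : all (lexge f) gs ->
  0 < n <= size (flatten gs) -> exists2 i, i < n & lexle (drop i (take n (flatten gs))) f.
Proof.
elim: gs n => [|g gs IH] n /=; first by case: n.
case/andP=> gf gsf /andP[n0 ng]; rewrite take_cat.
case: (ltngtP n (size g)) => gn.
- exists 0 => //; rewrite drop0; apply: lexle_trans gf.
  by rewrite -{2}(cat_take_drop n g) lexle_prefix.
- have [|i ign ile] := IH (n - size g) gsf; first by rewrite size_cat in ng; lia.
  by exists (size g + i); [lia|rewrite drop_cat ltnNge leq_addr /= addKn].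
- by exists 0 => //; rewrite gn subnn take0 cats0 drop0.
Qed.

Lemma is_lfact_lyndon_prefix w f fs p q : is_lfact w (f :: fs) -> w = p ++ q ->
  lyndon p -> size p <= size f.
Proof.
case/and3P=> /eqP wE /andP[fL _] fsS wpq pL; rewrite leqNgt; apply/negP => fp.
have fsf : all (lexge f) fs by move: fsS; rewrite /= lexge_path_sortedE => /andP[].
set t := take (size p - size f) (flatten fs).
have sw : size p + size q = size f + size (flatten fs).
  by rewrite -!size_cat -wpq -wE.
have pE : p = f ++ t.
  by rewrite -[p](take_size_cat q erefl) -wpq -wE take_cat ltnNge (ltnW fp) /=.
have [|i it tf] := prefix_flatten_suffix_le fsf (n := size p - size f); first by lia.
have st : size t = size p - size f by rewrite size_takel //; lia.
have tiS : drop i t \in psuffixes p.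
  rewrite pE -{2}(cat_take_drop i t) catA; apply: psuffix_cat.
    exact/cat_neq0l/lyndon_neq0.
  by rewrite -size_gt0 size_drop; lia.
have fp' : lexlt f p by rewrite pE lexlt_prefix // -size_gt0; lia.
by move: (lexlt_trans fp' (lyndon_lt_psuffix pL tiS)); rewrite lexltNge tf.
Qed.

Lemma is_lfact_uniq w fs gs : is_lfact w fs -> is_lfact w gs -> fs = gs.
Proof.
elim: fs w gs => [|f fs IH] w [|g gs] //.
- by case/and3P=> /eqP <- _ _ /and3P[/eqP /= + /andP[/lyndon_neq0 + _] _]; case: g.
- by case/and3P=> /eqP /= <- /andP[/lyndon_neq0 + _] _ /and3P[/eqP /= + _ _]; case: f.
move=> fsF gsF; case/and3P: (fsF) => /eqP /= fE /andP[fL fsL] fsS.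
case/and3P: (gsF) => /eqP /= gE /andP[gL gsL] gsS.
have fg : size f = size g.
  by apply/eqP; rewrite eqn_leq (is_lfact_lyndon_prefix fsF (esym gE) gL)
    (is_lfact_lyndon_prefix gsF (esym fE) fL).
have fgE : f = g.
  have : take (size f) w = take (size g) w by rewrite fg.
  by rewrite -{1}fE -gE !take_size_cat.
subst g.
have fsgs : flatten fs = flatten gs.
  by move/eqP: gE; rewrite -fE eqseq_cat // eqxx eq_sym => /eqP.
congr (_ :: _); apply: (IH (flatten fs)); rewrite /is_lfact ?fsgs eqxx.
- by rewrite fsL (path_sorted fsS).
- by rewrite gsL (path_sorted gsS).
Qed.

(* [p] absorbs the leading factors of [es] while they exceed the word built so
   far; this yields the Lyndon factorization of [p ++ flatten es]. *)
Lemma lyndon_merge p es : lyndon p -> all (@lyndon _ T) es -> sorted lexge es ->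
  exists t, [/\ t <= size es, lyndon (p ++ flatten (take t es)),
    sorted lexge ((p ++ flatten (take t es)) :: drop t es) &
    (all (lexle (head [::] es)) (psuffixes p) ->
       forall k, k < t -> smallest_psuffix (nth [::] es k) (p ++ flatten (take k.+1 es)))].
Proof.
elim: es p => [|e es IH] p pL; first by exists 0; rewrite /= cats0.
case/andP=> eL esL esS; have esS' : sorted lexge es := path_sorted esS.
case: (boolP (lexle e p)) => [ep|]; first by exists 0; rewrite /= cats0 ep.
rewrite -lexltNge => pe.
have [t [tes tL tS tmin]] := IH _ (lyndon_cat pL eL pe) esL esS'.
exists t.+1; split; rewrite /= ?catA //.
move=> pmin [|k] kt /=; first by rewrite take0 cats0 smallest_psuffix_cat ?lyndon_neq0.
rewrite catA; apply: tmin => //.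
have /andP[_ /allP peS] := smallest_psuffix_cat (lyndon_neq0 pL) eL pmin.
apply/allP => y /peS; apply: lexle_trans.
by case: (es) esS => [|e' es'] /=; [rewrite lexle0s|case/andP].
Qed.

Lemma is_lfact_exists w : exists fs, is_lfact w fs.
Proof.
elim: w => [|a w [fs /and3P[/eqP wE fsL fsS]]]; first by exists [::].
have [t [_ /= aL aS _]] := lyndon_merge (p := [:: a]) erefl fsL fsS.
exists ((a :: flatten (take t fs)) :: drop t fs).
rewrite /is_lfact /= -flatten_cat cat_take_drop wE eqxx.
by rewrite aL aS andbT; apply/allP => y /mem_drop; apply/allP.
Qed.

Lemma lfact_eq w fs : is_lfact w fs -> lfact w = fs.
Proof.
move=> fsF; apply: nth0_eq_all => [|g]; last first.
  by rewrite mem_filter => /andP[gF _]; apply: is_lfact_uniq gF fsF.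
case/and3P: (fsF) => /eqP fsE /allP fsL _.
rewrite mem_filter fsF mem_splits //.
by apply/allP => f /fsL /lyndon_neq0.
Qed.

Lemma lfactP w : is_lfact w (lfact w).
Proof. by have [fs fsF] := is_lfact_exists w; rewrite (lfact_eq fsF). Qed.

Lemma lexgt_sorted_lexge fs : sorted lexgt fs -> sorted lexge fs.
Proof. by apply: sub_sorted => x y; apply: lexltW. Qed.

Lemma lexge_sorted_head es y : sorted lexge es -> y \in es -> lexle y (head [::] es).
Proof.
case: es => [|e es] //= esS; rewrite inE => /predU1P[->|ye]; first exact: lexle_refl.
by move: esS; rewrite lexge_path_sortedE => /andP[/allP/(_ _ ye)].
Qed.

Lemma lfact_nil : lfact ([::] : word) = [::].
Proof. exact: lfact_eq. Qed.

Lemma lfact_rcons fs x : all (@lyndon _ T) fs -> lyndon x -> sorted lexgt (rcons fs x) ->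
  lfact (flatten fs ++ x) = rcons fs x.
Proof.
move=> fsL xL fsS; apply: lfact_eq.
by rewrite /is_lfact flatten_rcons eqxx all_rcons xL fsL lexgt_sorted_lexge.
Qed.

Lemma lfact_cons x es : lyndon x -> all (@lyndon _ T) es -> sorted lexge (x :: es) ->
  lfact (x ++ flatten es) = x :: es.
Proof. by move=> xL esL esS; apply: lfact_eq; rewrite /is_lfact /= eqxx xL esL. Qed.

Lemma lexge_sorted_uniq fs : sorted lexge fs -> uniq fs -> sorted lexgt fs.
Proof.
case: fs => //= f fs; elim: fs f => //= g fs IH f /andP[gf gsS].
rewrite inE negb_or => /andP[/andP[fg _] /andP[gfs fsU]].
by rewrite IH ?gfs // andbT; move: gf; rewrite /lexle eq_sym (negbTE fg).
Qed.

End LyndonFactorization.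

Section IteratedStandardFactorization.
Variables (d : Order.disp_t) (T : finOrderType d).
Notation word := (seq T).
Implicit Types u v w x y z p l r s a e : word.
Implicit Types fs gs es ss : seq word.
Implicit Types o : option word.

Definition smallest_suffix_chain r ss :=
  all (fun k => smallest_psuffix (nth [::] ss k) (flatten (r :: take k.+1 ss)))
      (iota 0 (size ss)).

Lemma smallest_suffix_chain_rcons r ss a :
  smallest_suffix_chain r (rcons ss a) =
  smallest_suffix_chain r ss && smallest_psuffix a (flatten (r :: rcons ss a)).
Proof.
rewrite /smallest_suffix_chain size_rcons -addn1 iotaD all_cat /= add0n andbT.
congr (_ && _); last by rewrite nth_rcons ltnn eqxx take_oversize // size_rcons.
apply: eq_in_all => k; rewrite mem_iota add0n => /andP[_ kss].
by rewrite nth_rcons kss -cats1 takel_cat.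
Qed.

Lemma is_isfE l o r ss : is_isf l o (r :: ss) =
  [&& ss != [::], flatten (r :: ss) == l, smallest_suffix_chain r ss,
      all (fun s => ~~ odd (size s) && ltinf (Some s) o) (behead ss)
    & odd (size (head [::] ss)) || leinf o (Some (head [::] ss))].
Proof. by case: ss. Qed.

Lemma ltinf_leinfF a o : ltinf (Some a) o -> leinf o (Some a) = false.
Proof.
case: o => [b|] //= ab; apply/negP; rewrite /leinf /= => /orP[/eqP[ba]|/lexlt_asym//].
by move: ab; rewrite ba lexltxx.
Qed.

Lemma leinf_some a b : leinf (Some a) (Some b) = lexle a b.
Proof. by rewrite /leinf /lexle /=; congr (_ || _); apply/eqP/eqP => [[]|->]. Qed.

Lemma lexlt_ltinf_trans a b o : lexlt a b -> ltinf (Some b) o -> ltinf (Some a) o.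
Proof. by case: o => //= c; apply: lexlt_trans. Qed.

Lemma is_isf_rcons_inv l o r ss a : is_isf l o (r :: rcons ss a) ->
  [/\ smallest_psuffix a l, l = flatten (r :: ss) ++ a &
      if ss is [::] then odd (size a) || leinf o (Some a)
      else is_isf (flatten (r :: ss)) o (r :: ss) /\ ~~ odd (size a) && ltinf (Some a) o].
Proof.
rewrite is_isfE smallest_suffix_chain_rcons => /and5P[_ /eqP lE /andP[ssC aS] ssE hd].
have lE' : l = flatten (r :: ss) ++ a by rewrite -lE /= flatten_rcons catA.
split=> //; first by rewrite -lE.
case: ss lE lE' ssC ssE hd {aS} => [|b ss] // lE lE' ssC.
rewrite rcons_cons [behead _]/= all_rcons => /andP[aE ssE] hd.
by split=> //; rewrite is_isfE eqxx ssC ssE.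
Qed.

Lemma is_isf_uniq l o q1 q2 : is_isf l o q1 -> is_isf l o q2 -> q1 = q2.
Proof.
case: q1 q2 => [|r1 ss1] [|r2 ss2] //.
elim/last_ind: ss1 l ss2 r1 r2 => [|ss1 a1 IH] l ss2 r1 r2 //.
case/lastP: ss2 => [|ss2 a2] //.
move=> /is_isf_rcons_inv[a1S l1E isf1] /is_isf_rcons_inv[a2S l2E isf2].
have a12 := smallest_psuffix_uniq a1S a2S; subst a2.
have e : flatten (r1 :: ss1) = flatten (r2 :: ss2).
  by apply: (@cat_injl _ a1); rewrite -l1E -l2E.
clear l1E l2E a1S a2S; case: ss1 ss2 isf1 isf2 e IH => [|b1 ss1] [|b2 ss2] isf1 isf2 e IH.
- by move: e; rewrite /= !cats0 => ->.
- case: isf2 => _ /andP[a1e /ltinf_leinfF a1o].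
  by move: isf1; rewrite a1o orbF (negbTE a1e).
- case: isf1 => _ /andP[a1e /ltinf_leinfF a1o].
  by move: isf2; rewrite a1o orbF (negbTE a1e).
- case: isf1 isf2 => [isf1 _] [isf2 _]; rewrite e in isf1.
  by case: (IH _ _ _ _ isf1 isf2) => -> -> ->.
Qed.

Lemma isf_eq l o q : is_isf l o q -> isf l o = q.
Proof.
move=> qI; apply: nth0_eq_all => [|c]; last first.
  by rewrite mem_filter => /andP[cI _]; apply: is_isf_uniq cI qI.
rewrite mem_filter qI /=; case: q qI => [|r ss] //.
rewrite is_isfE => /and5P[ss0 /eqP lE /allP ssC _ _]; apply: mem_splits => //=.
have ssS k : k < size ss ->
    smallest_psuffix (nth [::] ss k) (flatten (r :: take k.+1 ss)).
  by move=> kss; apply: ssC; rewrite mem_iota.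
apply/andP; split.
- case: ss ss0 ssS {ssC lE} => [|b ss] // _ /(_ 0 (ltn0Sn _)) /andP[/size_psuffix].
  by rewrite /= take0 cats0 size_cat -size_gt0; lia.
- by apply/allP => c /(nthP [::])[k kss <-]; case/andP: (ssS k kss) => /psuffix_neq0.
Qed.

Lemma is_isf_pair r s o : smallest_psuffix s (r ++ s) ->
  odd (size s) || leinf o (Some s) -> is_isf (r ++ s) o [:: r; s].
Proof. by move=> sS so; rewrite is_isfE /= cats0 eqxx so /smallest_suffix_chain /= cats0 sS. Qed.

Lemma is_isf_rcons x o r ss e : is_isf x o (r :: ss) -> smallest_psuffix e (x ++ e) ->
  ~~ odd (size e) && ltinf (Some e) o -> is_isf (x ++ e) o (r :: rcons ss e).
Proof.
rewrite !is_isfE => /and5P[ss0 /eqP xE ssC ssE hd] eS eE.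
have fE : flatten (r :: rcons ss e) = x ++ e by rewrite -xE /= flatten_rcons catA.
rewrite fE eqxx smallest_suffix_chain_rcons ssC fE eS /=.
by case: ss ss0 {xE ssC fE} ssE hd => [|b ss] // _ ssE hd; rewrite rcons_cons /= all_rcons eE ssE.
Qed.

Lemma is_isf_extend p o r1 s1 es t : is_isf p o [:: r1; s1] -> t <= size es ->
  (forall k, k < t -> smallest_psuffix (nth [::] es k) (p ++ flatten (take k.+1 es))) ->
  all (fun e => ~~ odd (size e) && ltinf (Some e) o) (take t es) ->
  is_isf (p ++ flatten (take t es)) o (r1 :: s1 :: take t es).
Proof.
move=> pI; elim: t => [|k IH] kes esS esE; first by rewrite take0 cats0.
move: esE; rewrite (take_nth [::] kes) all_rcons => /andP[eE esE].
rewrite flatten_rcons catA -rcons_cons; apply: is_isf_rcons eE.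
- by apply: IH esE => [|k' k'k]; [apply: ltnW|apply: esS; apply: ltnW].
- by rewrite -catA -flatten_rcons -take_nth //; apply: esS.
Qed.

End IteratedStandardFactorization.

Section PsiOmega.
Variables (d : Order.disp_t) (T : finOrderType d).
Notation word := (seq T).
Implicit Types u v w x y z p l r s a e b O E : word.
Implicit Types fs gs es ss : seq word.

Definition lastopt fs : option word := if fs is [::] then None else Some (last [::] fs).

Lemma lastopt_rcons fs x : lastopt (rcons fs x) = Some x.
Proof. by case: fs => [|y fs] //=; rewrite last_rcons. Qed.

Lemma psi_prev_factorE fs0 om :
  (if 2 <= size (rcons fs0 om) then Some (nth [::] (rcons fs0 om) (size (rcons fs0 om) - 2))
   else None) = lastopt fs0.
Proof.
case/lastP: fs0 => [|fs1 o1] //; rewrite lastopt_rcons !size_rcons subSS subn1 /=.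
by rewrite nth_rcons size_rcons ltnS leqnn nth_rcons ltnn eqxx.
Qed.

Lemma psi_step_split O E fs0 om : lfact O = rcons fs0 om -> 1 < size om ->
  ltinf (Some (std_s om)) (lastopt fs0) ->
  psi_step (O, E) = if odd (size (std_r om))
                    then (flatten fs0 ++ std_r om, std_s om ++ E)
                    else (flatten fs0 ++ std_s om, std_r om ++ E).
Proof.
move=> OF om1 som; rewrite /psi_step OF last_rcons psi_prev_factorE om1 som /=.
by rewrite size_rcons /= -cats1 take_size_cat.
Qed.

Lemma psi_step_fuse O E fs1 o1 om : lfact O = rcons (rcons fs1 o1) om ->
  ~~ ((1 < size om) && lexlt (std_s om) o1) ->
  psi_step (O, E) = (flatten fs1, om ++ o1 ++ E).
Proof.
move=> OF nsplit; rewrite /psi_step OF last_rcons psi_prev_factorE lastopt_rcons /=.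
rewrite (negbTE nsplit) !size_rcons !subSS subn0 -!cats1 -catA.
by rewrite nth_cat ltnn subnn take_size_cat.
Qed.

Lemma omega_stepE O' E' ofs x es : lfact O' = ofs -> lfact E' = x :: es ->
  let o := lastopt ofs in let q := isf x o in
  omega_step (O', E') =
  if ltinf o (Some x) then (O' ++ x, flatten es)
  else if leinf o (Some (head [::] (behead q)))
  then (flatten (belast [::] ofs) ++ head [::] q ++ head [::] (behead q) ++ last [::] ofs,
        flatten (behead (behead q)) ++ flatten es)
  else (O' ++ head [::] (behead q) ++ head [::] q, flatten (behead (behead q)) ++ flatten es).
Proof. by rewrite /omega_step => -> ->; case: ofs. Qed.

Lemma odd_size_flatten_even es :
  all (fun e => ~~ odd (size e)) es -> odd (size (flatten es)) = false.
Proof. by elim: es => //= e es IH /andP[/negbTE eE /IH]; rewrite size_cat oddD eE => ->. Qed.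

Lemma lexgt_sorted_rcons fs x :
  sorted lexgt (rcons fs x) = sorted lexgt fs && ltinf (Some x) (lastopt fs).
Proof. by case: fs => [|y fs] //=; rewrite rcons_path. Qed.

Lemma lt_last_lyndon_factor x fs om : lyndon om -> lexlt x om ->
  sorted lexgt (rcons fs om) -> all (lexle x) (psuffixes om) /\ ltinf (Some x) (lastopt fs).
Proof.
move=> omL xom; rewrite lexgt_sorted_rcons => /andP[_ omfs]; split.
  by apply/allP => y /(lyndon_lt_psuffix omL) /(lexlt_trans xom) /lexltW.
exact: lexlt_ltinf_trans omfs.
Qed.

Lemma lfact_absorb_isf p r1 s1 o b E :
  all (fun e => ~~ odd (size e)) (lfact E) -> lyndon p -> is_isf p o [:: r1; s1] ->
  all (lexle (head [::] (lfact E))) (psuffixes p) ->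
  lexlt p b -> lexlt (head [::] (lfact E)) b -> (forall e, lexlt e b -> ltinf (Some e) o) ->
  exists t, [/\ lfact (p ++ E) = (p ++ flatten (take t (lfact E))) :: drop t (lfact E),
    isf (p ++ flatten (take t (lfact E))) o = r1 :: s1 :: take t (lfact E),
    lexlt (p ++ flatten (take t (lfact E))) b &
    odd (size (p ++ flatten (take t (lfact E)))) = odd (size p)].
Proof.
move=> Eeven pL pI pmin pb Eb bo; have /and3P[/eqP EE EL ES] := lfactP E.
have [t [tE xL xS /(_ pmin) xmin]] := lyndon_merge pL EL ES.
set x := p ++ flatten (take t (lfact E)) in xL xS *; exists t; split.
- apply: lfact_eq; rewrite /is_lfact xS /= xL all_drop // !andbT.
  by rewrite /x -catA -flatten_cat cat_take_drop EE.
- apply/isf_eq/is_isf_extend => //; apply/allP => e /mem_take eE.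
  rewrite (allP Eeven _ eE) bo //.
  by apply: lexle_lt_trans Eb; apply: lexge_sorted_head.
- rewrite /x in xL *; case: t tE xL xmin {xS x} => [|k] kE xL xmin; first by rewrite take0 cats0.
  have /andP[ekx _] := xmin k (ltnSn k).
  apply: lexlt_trans (lyndon_lt_psuffix xL ekx) _.
  by apply: lexle_lt_trans Eb; apply/lexge_sorted_head/mem_nth.
- by rewrite /x size_cat oddD odd_size_flatten_even ?addbF // all_take.
Qed.

(* For E empty, its "first factor" [head [::] (lfact E)] is the empty word. *)
Definition psi_inv O E :=
  [/\ all (fun l => odd (size l)) (lfact O), sorted lexgt (lfact O),
      all (fun e => ~~ odd (size e)) (lfact E) &
      forall fs om, lfact O = rcons fs om ->
        all (lexle (head [::] (lfact E))) (psuffixes om) /\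
        ltinf (Some (head [::] (lfact E))) (lastopt fs)].

Lemma lfact_rconsP O fs om : lfact O = rcons fs om ->
  [/\ O = flatten fs ++ om, all (@lyndon _ T) fs & lyndon om].
Proof.
move=> OF; case/and3P: (lfactP O) => /eqP; rewrite OF flatten_rcons all_rcons.
by move=> -> /andP[-> ->].
Qed.

Lemma psi_case_S O E fs om : lfact O = rcons fs om -> psi_inv O E -> 1 < size om ->
  ltinf (Some (std_s om)) (lastopt fs) -> odd (size (std_r om)) ->
  [/\ psi_inv (flatten fs ++ std_r om) (std_s om ++ E), std_s om ++ E != [::] &
      omega_step (flatten fs ++ std_r om, std_s om ++ E) = (O, E)].
Proof.
move=> OF; rewrite /psi_inv OF all_rcons lexgt_sorted_rcons.
move=> [/andP[omodd fsodd] /andP[fsS omfs] Eeven /(_ _ _ erefl)[Emin _]] om1 sfs rodd.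
have [OE fsL omL] := lfact_rconsP OF.
have /and3P[/eqP EE EL ES] := lfactP E.
have sS := std_s_smallest om1; have rL := std_r_lyndon omL om1.
have sL := std_s_lyndon om1; have omE := std_rs om.
set r := std_r om in rodd rL omE *; set s := std_s om in sfs sS sL omE *.
have sps : s \in psuffixes om by case/andP: sS.
have rom : lexlt r om by rewrite -omE lexlt_prefix ?lyndon_neq0.
have oms : lexlt om s := lyndon_lt_psuffix omL sps.
have rfs : ltinf (Some r) (lastopt fs) := lexlt_ltinf_trans rom omfs.
have O'F : lfact (flatten fs ++ r) = rcons fs r.
  by apply: lfact_rcons; rewrite // lexgt_sorted_rcons fsS.
have E'F : lfact (s ++ E) = s :: lfact E.
  rewrite -{1}EE lfact_cons //=.
  by case: (lfact E) Emin ES => //= e es /allP/(_ _ sps) -> ->.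
have seven : ~~ odd (size s) by move: omodd; rewrite -omE size_cat oddD rodd.
split.
- split; rewrite ?O'F ?E'F /= ?all_rcons ?lexgt_sorted_rcons ?rodd ?fsodd ?fsS ?rfs ?seven //.
  by move=> fs' om' /rcons_inj[<- <-]; rewrite std_s_le_psuffixes_r.
- by rewrite cat_neq0l ?lyndon_neq0.
- rewrite (omega_stepE O'F E'F) lastopt_rcons /= (lexlt_trans rom oms).
  by rewrite -catA omE -OE EE.
Qed.

Lemma psi_case_P O E fs om : lfact O = rcons fs om -> psi_inv O E -> 1 < size om ->
  ltinf (Some (std_s om)) (lastopt fs) -> ~~ odd (size (std_r om)) ->
  [/\ psi_inv (flatten fs ++ std_s om) (std_r om ++ E), std_r om ++ E != [::] &
      omega_step (flatten fs ++ std_s om, std_r om ++ E) = (O, E)].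
Proof.
move=> OF; rewrite /psi_inv OF all_rcons lexgt_sorted_rcons.
move=> [/andP[omodd fsodd] /andP[fsS omfs] Eeven /(_ _ _ erefl)[Emin _]] om1 sfs reven.
have [OE fsL omL] := lfact_rconsP OF.
have /and3P[/eqP EE EL ES] := lfactP E.
have sS := std_s_smallest om1; have rL := std_r_lyndon omL om1.
have sL := std_s_lyndon om1; have omE := std_rs om; have rS := std_s_le_psuffixes_r om1.
set r := std_r om in reven rL omE rS *; set s := std_s om in sfs sS sL omE rS *.
have sps : s \in psuffixes om by case/andP: sS.
have rs : lexlt r s.
  apply: (lexlt_trans (v := om)); last exact: lyndon_lt_psuffix.
  by rewrite -omE lexlt_prefix ?lyndon_neq0.
have sodd : odd (size s) by move: omodd; rewrite -omE size_cat oddD (negbTE reven).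
have r1 : 1 < size r by move: (lyndon_neq0 rL) reven; rewrite -size_gt0; case: (size r) => [|[]].
have Es : lexlt (head [::] (lfact E)) s.
  move/allP/(_ _ sps): Emin; rewrite lexleE le_eqVlt -lexltE => /predU1P[sE|//].
  by move: Eeven sodd; rewrite -sE; case: (lfact E) => [|e es] //= /andP[/negbTE->].
have O'F : lfact (flatten fs ++ s) = rcons fs s.
  by apply: lfact_rcons; rewrite // lexgt_sorted_rcons fsS.
have rI : is_isf r (Some s) [:: std_r r; std_s r].
  rewrite -{1}(std_rs r); apply: is_isf_pair; first by rewrite std_rs std_s_smallest.
  by rewrite leinf_some (allP rS) ?orbT //; case/andP: (std_s_smallest r1).
have rmin : all (lexle (head [::] (lfact E))) (psuffixes r).
  by apply/allP => y /(allP rS); apply: lexle_trans (lexltW Es).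
have [t [E'F xI xs xodd]] := lfact_absorb_isf Eeven rL rI rmin rs Es (fun _ => id).
split.
- split; rewrite ?O'F ?E'F /= ?all_rcons ?lexgt_sorted_rcons ?sodd ?fsodd ?fsS ?sfs //.
    by rewrite xodd reven all_drop.
  move=> fs' om' /rcons_inj[<- <-]; apply: lt_last_lyndon_factor sL xs _.
  by rewrite lexgt_sorted_rcons fsS.
- by rewrite cat_neq0l ?lyndon_neq0.
- rewrite (omega_stepE O'F E'F) lastopt_rcons xI /= lexltNge (lexltW xs) /=.
  rewrite leinf_some (allP rS); last by case/andP: (std_s_smallest r1).
  rewrite belast_rcons last_rcons /= -flatten_cat cat_take_drop EE.
  by rewrite (catA (std_r r)) std_rs omE -OE.
Qed.

Lemma psi_case_F O E fs o1 om : lfact O = rcons (rcons fs o1) om -> psi_inv O E ->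
  ~~ ((1 < size om) && lexlt (std_s om) o1) ->
  [/\ psi_inv (flatten fs) (om ++ o1 ++ E), om ++ o1 ++ E != [::] &
      omega_step (flatten fs, om ++ o1 ++ E) = (O, E)].
Proof.
move=> OF; rewrite /psi_inv OF !all_rcons !lexgt_sorted_rcons lastopt_rcons.
move=> [/and3P[omodd o1odd fsodd] /andP[/andP[fsS o1fs] omo1] Eeven].
move=> /(_ _ _ erefl)[Emin Eo1] nsplit; rewrite lastopt_rcons /= in Eo1 omo1.
have [OE] := lfact_rconsP OF; rewrite all_rcons => /andP[o1L fsL] omL.
have /and3P[/eqP EE EL ES] := lfactP E.
have o1min : all (lexle o1) (psuffixes om).
  case: (ltnP 1 (size om)) nsplit => [om1|/psuffixes_small-> //]; rewrite -lexleNgt /= => o1s.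
  by case/andP: (std_s_smallest om1) => _ /allP sS; apply/allP => y /sS; apply: lexle_trans.
have pS := smallest_psuffix_cat (lyndon_neq0 omL) o1L o1min.
have pI : is_isf (om ++ o1) (lastopt fs) [:: om; o1] by rewrite is_isf_pair ?o1odd.
have pmin : all (lexle (head [::] (lfact E))) (psuffixes (om ++ o1)).
  by case/andP: pS => _ /allP o1S; apply/allP => y /o1S; apply: lexle_trans (lexltW Eo1).
have [t [E'F xI xo1 xodd]] := lfact_absorb_isf Eeven (lyndon_cat omL o1L omo1) pI pmin
  (lexlt_cat_lyndon (lyndon_neq0 omL) omo1 o1L) Eo1 (fun _ eo1 => lexlt_ltinf_trans eo1 o1fs).
set x := (om ++ o1) ++ flatten (take t (lfact E)) in E'F xI xo1 xodd.
rewrite -catA in E'F.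
have xfs : ltinf (Some x) (lastopt fs) := lexlt_ltinf_trans xo1 o1fs.
have O'F : lfact (flatten fs) = fs.
  by apply: lfact_eq; rewrite /is_lfact eqxx fsL lexgt_sorted_lexge.
split.
- split; rewrite ?O'F ?E'F //=.
    by rewrite xodd size_cat oddD omodd o1odd all_drop.
  move=> fs' om' fsE; move: fsS fsL xfs; rewrite fsE lastopt_rcons all_rcons /= => fsS.
  by case/andP=> om'L _ xom'; apply: lt_last_lyndon_factor.
- by rewrite cat_neq0l ?lyndon_neq0.
- rewrite (omega_stepE O'F E'F) xI /= (ltinf_leinfF o1fs).
  have := ltinf_leinfF xfs; rewrite /leinf => /norP[_ /negbTE->].
  by rewrite -flatten_cat cat_take_drop EE OE !flatten_rcons -!catA.
Qed.

Lemma psi_inv_init n w : Wo n w -> psi_inv w [::].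
Proof.
case/and3P=> _ wodd wU; split; rewrite ?lfact_nil //.
  by apply: lexge_sorted_uniq wU; case/and3P: (lfactP w).
move=> fs om /lfact_rconsP[_ fsL _]; split; first by apply/allP => y _; apply: lexle0s.
case/lastP: fs fsL => [|fs f] //; rewrite lastopt_rcons all_rcons => /andP[/lyndon_neq0].
by case: f.
Qed.

Lemma psi_inv_step O E : psi_inv O E -> 1 < size O ->
  [/\ psi_inv (psi_step (O, E)).1 (psi_step (O, E)).2, (psi_step (O, E)).2 != [::] &
      omega_step (psi_step (O, E)) = (O, E)].
Proof.
move=> OI O1; have : lfact O != [::].
  by apply: contraTneq O1 => OF; case/and3P: (lfactP O) => /eqP; rewrite OF => <-.
case/lastP OF: (lfact O) => [|fs om] // _.
case: (boolP ((1 < size om) && ltinf (Some (std_s om)) (lastopt fs))) => [/andP[om1 sfs]|nsplit].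
  rewrite (psi_step_split _ OF om1 sfs); case: ifP => rodd.
  - by case: (psi_case_S OF OI om1 sfs rodd).
  - by case: (psi_case_P OF OI om1 sfs (negbT rodd)).
case/lastP: fs OF nsplit => [|fs o1] OF nsplit.
  by have [OE _ _] := lfact_rconsP OF; move: nsplit O1; rewrite OE /= andbT => /negbTE->.
rewrite lastopt_rcons in nsplit; rewrite (psi_step_fuse _ OF nsplit).
by case: (psi_case_F OF OI nsplit).
Qed.

Lemma psi_reach_inv n w q : Wo n w -> psi_reach w q -> psi_inv q.1 q.2.
Proof.
move=> wW; elim=> [|[O E] _ OI O1]; first exact: psi_inv_init wW.
by case: (psi_inv_step OI O1).
Qed.

End PsiOmega.

Theorem lemma4p22 (d : Order.disp_t) (T : finOrderType d) (n : nat)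
  (w : seq T) (O E : seq T) :
  Wo n w -> psi_reach w (O, E) -> 1 < size O ->
  (psi_step (O, E)).2 != [::] /\ omega_step (psi_step (O, E)) = (O, E).
Proof.
move=> wW wOE O1.
by case: (psi_inv_step (psi_reach_inv wW wOE) O1).
Qed.
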